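(* (1) The code $\mathcal C:\mathbb{F}_q^5\to(\mathbb{F}_q^2)^5$ given by $\mathbf c_i=(x_i,\,x_{i+2}+x_{i+3})$ for $i\in[5]$ (indices modulo $5$ in $[5]$; explicitly $\mathbf c_1=(x_1,x_3+x_4)$, $\mathbf c_2=(x_2,x_4+x_5)$, $\mathbf c_3=(x_3,x_5+x_1)$, $\mathbf c_4=(x_4,x_1+x_2)$, $\mathbf c_5=(x_5,x_2+x_3)$) is a $(5,10,3,5)$-BAC. (2) The code of Construction C built from the good vector $\mathbf v=(2,3,2,4,3,1,1,4)$ (with $t=4$, $n=17$) is a $(17,85,7,17)$-BAC.
   Context: Fix a finite field $\mathbb{F}_q$. For $\mathbf v$ with $t=4$ and $j\in[4]$, $j(\mathbf v)=\max\{i:v_i=j\}$ (so $1(\mathbf v)=7$, $2(\mathbf v)=3$, $3(\mathbf v)=5$, $4(\mathbf v)=8$). Construction C with $n=17$: indices modulo $17$ in $[17]$; for $\mathbf x\in\mathbb{F}_q^{17}$, $i\in[17]$, $j\in[4]$ put $y_{i,j}=x_{i-4-j(\mathbf v)}+x_{i-4-j(\mathbf v)+j}$ and $\mathbf c_i=(x_i,y_{i,1},\dots,y_{i,4})$. An $(n,N,k,m)$-batch array code (BAC) over $\mathbb{F}_q$ is an $\mathbb{F}_q$-linear map $\mathbf x\in\mathbb{F}_q^n\mapsto(\mathbf c_1,\dots,\mathbf c_m)$ with buckets $\mathbf c_\ell\in\mathbb{F}_q^{N_\ell}$, $N_\ell\ge1$, $\sum_\ell N_\ell=N$, such that for every multiset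 $\{\{i_1,\dots,i_k\}\}$ of elements of $[n]$ there is a partition of $[m]$ into $k$ sets $R_1,\dots,R_k$ such that for each $j\in[k]$, $x_{i_j}$ is an $\mathbb{F}_q$-linear combination of values $f_\ell(\mathbf c_\ell)$, $\ell\in R_j$, for some linear functionals $f_\ell$ (independent of $\mathbf x$). *)

From mathcomp Require Import all_boot all_order all_algebra.
Set Implicit Arguments. Unset Strict Implicit. Unset Printing Implicit Defensive.
Import GRing.Theory.
Local Open Scope ring_scope.

(* Indices: the paper's [n] = {1,...,n} is represented 0-based by 'I_n
   (paper index i  <->  ordinal i-1).  Vectors in F^n are row vectors 'rV[F]_n. *)

Definition mod_idx (n : nat) (z : int) : 'I_n.+1 := inord (absz (z %% n.+1)%Z).

(* For every multiset {{i_1..i_k}} of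
   elements of [n] (given as a k-tuple idx), there is a partition of [m] into
   k sets R_1..R_k (given by the map R : bucket -> part), linear functionals
   f_l on the buckets and coefficients lam_l, independent of x, such that
   x_{i_j} = sum_{l in R_j} lam_l * f_l(c_l) for all x. *)
Definition is_BAC (F : fieldType) (n N k m : nat) (Nl : 'I_m -> nat)
    (enc : forall l : 'I_m, 'rV[F]_n -> 'rV[F]_(Nl l)) : Prop :=
  [/\ (forall l a (x y : 'rV[F]_n), enc l (a *: x + y) = a *: enc l x + enc l y),
      (forall l, (0 < Nl l)%N),
      (\sum_(l < m) Nl l)%N = N &
      forall idx : 'I_k -> 'I_n,
        exists (R : 'I_m -> 'I_k)
               (f : forall l : 'I_m, 'rV[F]_(Nl l) -> F)
               (lam : 'I_m -> F),
          (forall l a (c d : 'rV[F]_(Nl l)), f l (a *: c + d) = a * f l c + f l d) /\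
          forall (j : 'I_k) (x : 'rV[F]_n),
            x ord0 (idx j) = \sum_(l < m | R l == j) lam l * f l (enc l x)].

Definition code5 (F : fieldType) (l : 'I_5) (x : 'rV[F]_5) : 'rV[F]_2 :=
  \row_(b < 2) if b == ord0 then x ord0 l
               else x ord0 (mod_idx 4 (l%:Z + 2)) + x ord0 (mod_idx 4 (l%:Z + 3)).

Definition jpos (v : seq nat) (j : nat) : nat :=
  \max_(i < size v | nth 0%N v i == j) i.+1.

(* Construction C with t = 4 and length n.+1:
   c_i = (x_i, y_{i,1}, ..., y_{i,4}),
   y_{i,j} = x_{i-4-j(v)} + x_{i-4-j(v)+j}, indices mod n.+1.
   (The shift i-4-j(v) is the same in 0-based and 1-based indexing.) *)
Definition constrC (F : fieldType) (v : seq nat) (n : nat)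
    (l : 'I_n.+1) (x : 'rV[F]_n.+1) : 'rV[F]_5 :=
  \row_(b < 5) if b == ord0 then x ord0 l
               else x ord0 (mod_idx n (l%:Z - 4 - (jpos v b)%:Z))
                  + x ord0 (mod_idx n (l%:Z - 4 - (jpos v b)%:Z + b%:Z)).

Definition good_v : seq nat := [:: 2; 3; 2; 4; 3; 1; 1; 4]%N.
Arguments is_BAC : clear implicits.
Arguments code5 : clear implicits.
Arguments constrC : clear implicits.

(* Both codes are sum codes: every coordinate of a bucket is a sum of message
   symbols (the systematic symbol x_l, then parities x_a + x_b).  A request for
   x_i is served either by the systematic coordinate of bucket i, or by a parity
   x_i + x_q of some bucket together with the systematic coordinate of bucket q.
   A multiset of requests is served as soon as one such group per request can be
   chosen with pairwise disjoint buckets: each bucket then answers with one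
   functional.  Existence of such groups for every sorted multiset is decided by
   a backtracking search run by computation; the soundness of this check is
   proved once for arbitrary sum codes, and requests in arbitrary order are
   handled by permuting the groups found for the sorted multiset. *)

From HB Require Import structures.
From mathcomp Require Import all_boot all_order all_algebra.
Set Implicit Arguments. Unset Strict Implicit. Unset Printing Implicit Defensive.
Import GRing.Theory.
Local Open Scope ring_scope.

(* [Term l b c] stands for c times coordinate b of bucket l (0-based); a list of
   terms (a group) denotes the linear combination of their values. *)
Record term := Term { bucket : nat; coord : nat; coef : int }.

Definition term_tuple (e : term) := (bucket e, coord e, coef e).
Definition tuple_term (bcz : nat * nat * int) := let: (b, c, z) := bcz in Term b c z.
Lemma term_tupleK : cancel term_tuple tuple_term. Proof. by case. Qed.
HB.instance Definition _ := Equality.copy term (can_type term_tupleK).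

Section Recovery.

(* [supp l b] lists, with multiplicity, the message indices summed in
   coordinate b of bucket l. *)
Variable supp : nat -> nat -> seq nat.

Definition term_support (e : term) : seq nat := supp (bucket e) (coord e).

Definition group_coef (g : seq term) (q : nat) : int :=
  foldr (fun e z => coef e * (count_mem q (term_support e))%:Z + z) 0 g.

Definition recovers (i : nat) (g : seq term) : bool :=
  all (fun q => group_coef g q == (q == i)%:Z) (i :: flatten (map term_support g)).

Lemma group_coef_out g q :
  q \notin flatten (map term_support g) -> group_coef g q = 0.
Proof.
elim: g => [|e g IH] //=; rewrite mem_cat negb_or => /andP[qNe qNg].
by rewrite IH // (count_memPn qNe) mulr0 add0r.
Qed.

Lemma recovers_coef i g : recovers i g -> forall q, group_coef g q = (q == i)%:Z.
Proof.
move=> /allP rec q; have [qg|qNg] := boolP (q \in i :: flatten (map term_support g)).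
  exact/eqP/rec.
move: qNg; rewrite in_cons negb_or => /andP[/negbTE -> /group_coef_out] //.
Qed.

Lemma sum_inord_count (V : zmodType) n (x : 'I_n.+1 -> V) (s : seq nat) :
  all (fun p => p <= n)%N s ->
  \sum_(p <- s) x (inord p) = \sum_(q < n.+1) x q *+ count_mem (val q) s.
Proof.
elim: s => [|p s IH] /=; first by rewrite big_nil big1.
move=> /andP[pn sn]; rewrite big_cons IH //.
under [RHS]eq_bigr do rewrite mulrnDr.
rewrite big_split /=; congr (_ + _).
rewrite (bigD1 (inord p)) //= inordK // eqxx big1 ?addr0 // => q qNp.
by rewrite -(inj_eq val_inj) /= inordK // in qNp; rewrite eq_sym (negbTE qNp).
Qed.

Lemma sum_group_coef (R : pzRingType) n (x : 'I_n.+1 -> R) (g : seq term) :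
  all (fun e => all (fun p => p <= n)%N (term_support e)) g ->
  \sum_(e <- g) (coef e)%:~R * \sum_(p <- term_support e) x (inord p)
    = \sum_(q < n.+1) (group_coef g q)%:~R * x q.
Proof.
elim: g => [|e g IH] /=; first by rewrite big_nil big1 // => q _; rewrite mul0r.
move=> /andP[eb gb]; rewrite big_cons IH // sum_inord_count // mulr_sumr -big_split.
apply: eq_bigr => q _; rewrite intrD intrM mulrDl -mulrA.
by rewrite -[X in _ * X]mulr_natl.
Qed.

Lemma recovers_sum (R : pzRingType) n (x : 'I_n.+1 -> R) i (g : seq term) :
  recovers i g -> (i <= n)%N ->
  all (fun e => all (fun p => p <= n)%N (term_support e)) g ->
  \sum_(e <- g) (coef e)%:~R * \sum_(p <- term_support e) x (inord p) = x (inord i).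
Proof.
move=> rec le_in gb; rewrite sum_group_coef // (bigD1 (inord i)) //= (recovers_coef rec).
rewrite inordK // eqxx mul1r big1 ?addr0 // => q qNi.
rewrite -(inj_eq val_inj) /= inordK // in qNi.
by rewrite (recovers_coef rec) (negbTE qNi) mul0r.
Qed.

End Recovery.

Definition in_range (m N : nat) (e : term) : bool := (bucket e < m)%N && (coord e < N)%N.

Definition supports_below supp (n m N : nat) : bool :=
  all (fun l => all (fun b => all (fun p => p < n) (supp l b)) (iota 0 N))%N (iota 0 m).

Lemma in_range_supports supp n m N e :
  supports_below supp n.+1 m N -> in_range m N e ->
  all (fun p => p <= n)%N (term_support supp e).
Proof.
move=> /allP suppB /andP[lt_bm lt_cN].
have := suppB (bucket e); rewrite mem_iota lt_bm => /(_ isT) /allP.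
by apply; rewrite mem_iota.
Qed.

Fixpoint try_groups (extend : seq nat -> option (seq (seq term))) (used : seq nat)
    (gs : seq (seq term)) : option (seq (seq term)) :=
  if gs is g :: gs' then
    if all (fun e => bucket e \notin used) g then
      if extend (map bucket g ++ used) is Some G then Some (g :: G)
      else try_groups extend used gs'
    else try_groups extend used gs'
  else None.

Fixpoint find_groups (C : seq (seq (seq term))) (M : seq nat) (used : seq nat)
    : option (seq (seq term)) :=
  if M is i :: M' then try_groups (find_groups C M') used (nth [::] C i) else Some [::].

Lemma try_groups_some (Pg : pred (seq term)) (PG : seq (seq term) -> Prop) extend used gs G :
  (forall used' G', extend used' = Some G' -> PG G') -> all Pg gs ->
  try_groups extend used gs = Some G -> exists g G', [/\ G = g :: G', Pg g & PG G'].
Proof.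
move=> extendP; elim: gs => [|g gs IH] //= /andP[Pg_g Pg_gs].
case: ifP => _; last exact: IH.
case E: (extend _) => [G'|]; last exact: IH.
by case=> <-; exists g, G'; split=> //; exact: extendP E.
Qed.

Lemma find_groups_sound (P : nat -> pred (seq term)) C M used G :
  (forall i, all (P i) (nth [::] C i)) -> find_groups C M used = Some G ->
  size G = size M /\ forall t, (t < size M)%N -> P (nth 0%N M t) (nth [::] G t).
Proof.
move=> CP; elim: M used G => [|i M IH] used G /=; first by case=> <-.
pose Q (G' : seq (seq term)) :=
  size G' = size M /\ forall t, (t < size M)%N -> P (nth 0%N M t) (nth [::] G' t).
case/(@try_groups_some (P i) Q _ _ _ _ (fun used' G' => IH used' G') (CP i)).
move=> g [G' [-> Pg [sz PG]]]; split=> [|[|t]] //=; first by rewrite sz.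
exact: PG.
Qed.

Fixpoint all_sorted_seqs (n k lo : nat) (P : seq nat -> bool) : bool :=
  if k is k'.+1 then
    all (fun i => all_sorted_seqs n k' i (fun s => P (i :: s))) (iota lo (n - lo))
  else P [::].

Lemma all_sorted_seqs_sound n k lo P :
  all_sorted_seqs n k lo P ->
  forall s, size s = k -> path leq lo s -> all (fun p => p < n)%N s -> P s.
Proof.
elim: k lo P => [|k IH] lo P /=; first by move=> Pnil [].
move=> /allP allP [|i s] //= [sz] /andP[le_lo_i si] /andP[lt_in sn].
have i_range : i \in iota lo (n - lo).
  by rewrite mem_iota subnKC ?le_lo_i // (leq_trans le_lo_i (ltnW lt_in)).
exact: (IH i _ (allP i i_range) s sz si sn).
Qed.

(* Validity of the candidates is not assumed: [batch_check] keeps only those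
   passing [recovers], and the search result is only trusted through the
   disjointness test. *)
Definition candidates supp (m N i : nat) : seq (seq term) :=
  [:: Term i 0 1] :: flatten [seq [seq [:: Term l b 1; Term q 0 (-1)] | q <- supp l b]
                             | l <- iota 0 m, b <- iota 1 N.-1].

Definition batch_check supp (n m N k : nat) : bool :=
  let C := mkseq (fun i => [seq g <- candidates supp m N i
                           | recovers supp i g && all (in_range m N) g]) n in
  supports_below supp n m N &&
  all_sorted_seqs n k 0 (fun M =>
    if find_groups C M [::] is Some G then uniq (flatten (map (map bucket) G)) else false).

Lemma uniq_flatten_disjoint (ss : seq (seq nat)) i j x :
  uniq (flatten ss) -> (i < j < size ss)%N ->
  x \in nth [::] ss i -> x \notin nth [::] ss j.
Proof.
rewrite -{1}(cat_take_drop j ss) flatten_cat cat_uniq.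
case/and3P=> _ disj _ /andP[lt_ij lt_j] xi; apply: contra disj => xj.
apply/hasP; exists x; first by rewrite (drop_nth [::] lt_j) /= mem_cat xj.
apply/flattenP; exists (nth [::] ss i) => //.
by rewrite -(nth_take [::] lt_ij) mem_nth // size_take lt_j.
Qed.

Definition part_of (G : seq (seq term)) (l : nat) : nat :=
  find (fun g => l \in map bucket g) G.

Lemma sum_group_bucket (V : zmodType) (G : seq (seq term)) (T : term -> V) j l :
  uniq (flatten (map (map bucket) G)) -> (j < size G)%N ->
  \sum_(e <- nth [::] G j | bucket e == l) T e
    = if part_of G l == j then \sum_(e <- nth [::] G (part_of G l) | bucket e == l) T e
      else 0.
Proof.
move=> uG lt_jG; case: eqP => [-> //|neq_j]; apply: big_hasC.
rewrite -(has_map bucket (pred1 l)) has_pred1; apply/negP => lj.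
have lt_j : (part_of G l < j)%N.
  rewrite ltn_neqAle; apply/andP; split; first exact/eqP/neq_j.
  by rewrite leqNgt; apply: contraL lj => /(before_find [::]) ->.
have /(nth_find [::]) lp : has (fun g => l \in map bucket g) G.
  by apply/(has_nthP [::]); exists j.
have lt_pG := ltn_trans lt_j lt_jG.
have := @uniq_flatten_disjoint _ (part_of G l) j l uG.
by rewrite size_map lt_j lt_jG !(nth_map [::]) // => /(_ isT lp); rewrite lj.
Qed.

Lemma batch_check_groups supp n m N k (M : seq nat) :
  batch_check supp n m N k -> size M = k -> sorted leq M -> all (fun p => p < n)%N M ->
  exists G : seq (seq term),
    [/\ size G = k, uniq (flatten (map (map bucket) G)) &
     forall t, (t < k)%N ->
       recovers supp (nth 0%N M t) (nth [::] G t) && all (in_range m N) (nth [::] G t)].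
Proof.
rewrite /batch_check; set C := mkseq _ n.
case/andP=> _ /all_sorted_seqs_sound check szM srtM ltM.
have pathM : path leq 0 M by case: M srtM {szM ltM check}.
move: (check M szM pathM ltM); case E: find_groups => [G|] // uG.
have CP i : all (fun g => recovers supp i g && all (in_range m N) g) (nth [::] C i).
  have [lt_in|ge_in] := ltnP i n; last by rewrite nth_default ?size_mkseq.
  by rewrite (nth_mkseq _ _ lt_in); apply: filter_all.
have [szG GP] := find_groups_sound CP E.
exists G; split=> // [|t lt_tk]; first by rewrite szG.
by apply: GP; rewrite szM.
Qed.

Section SumCode.

Variables (F : fieldType) (n m N : nat) (supp : nat -> nat -> seq nat).
Variable enc : 'I_m.+1 -> 'rV[F]_n.+1 -> 'rV[F]_N.+1.
Hypothesis encE : forall (l : 'I_m.+1) x b, (b <= N)%N ->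
  enc l x ord0 (inord b) = \sum_(p <- supp l b) x ord0 (inord p).

Lemma enc_linear l a (x y : 'rV[F]_n.+1) : enc l (a *: x + y) = a *: enc l x + enc l y.
Proof.
apply/rowP => b; rewrite -[b]inord_val !mxE !(encE _ _ (ltn_ord b)) mulr_sumr -big_split.
by apply: eq_bigr => p _; rewrite !mxE.
Qed.

Lemma groups_recovery k (G : seq (seq term)) (idx : 'I_k.+1 -> 'I_n.+1) :
  supports_below supp n.+1 m.+1 N.+1 ->
  size G = k.+1 -> uniq (flatten (map (map bucket) G)) ->
  (forall j : 'I_k.+1,
     recovers supp (idx j) (nth [::] G j) && all (in_range m.+1 N.+1) (nth [::] G j)) ->
  exists (R : 'I_m.+1 -> 'I_k.+1) (f : forall l : 'I_m.+1, 'rV[F]_N.+1 -> F)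
         (lam : 'I_m.+1 -> F),
    (forall l a (c d : 'rV[F]_N.+1), f l (a *: c + d) = a * f l c + f l d) /\
    forall (j : 'I_k.+1) (x : 'rV[F]_n.+1),
      x ord0 (idx j) = \sum_(l < m.+1 | R l == j) lam l * f l (enc l x).
Proof.
(* Bucket l goes to the group containing it, and answers with the part of that
   group's combination carried by its own coordinates. *)
move=> suppB sizeG uG Gj.
pose T (c : 'rV[F]_N.+1) (e : term) := (coef e)%:~R * c ord0 (inord (coord e)).
pose f (l : 'I_m.+1) c := \sum_(e <- nth [::] G (part_of G l) | bucket e == l) T c e.
exists (fun l => inord (part_of G l)), f, (fun=> 1); split.
  move=> l a c d; rewrite /f mulr_sumr -big_split; apply: eq_bigr => e _.
  by rewrite /T !mxE mulrDr mulrCA.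
move=> j x; have /andP[rec range] := Gj j.
transitivity (\sum_(e <- nth [::] G j) \sum_(l < m.+1 | bucket e == l) T (enc l x) e).
  rewrite -[idx j]inord_val -(recovers_sum (fun q => x ord0 q) rec) ?(leq_ord (idx j)) //;
    last by apply/allP => e /(allP range) /(in_range_supports suppB).
  apply: eq_big_seq => e /(allP range) /andP[lt_bm lt_cN].
  rewrite (big_pred1 (inord (bucket e))) => [|l]; last first.
    by rewrite /= -(inj_eq val_inj) /= inordK // eq_sym.
  by rewrite /T (encE _ _ lt_cN) inordK.
rewrite (exchange_big_dep predT) //= [RHS]big_mkcond /=; apply: eq_bigr => l _.
rewrite sum_group_bucket ?sizeG // mul1r.
have [lt_pG|ge_pG] := ltnP (part_of G l) k.+1.
  by rewrite -(inj_eq val_inj) /= inordK.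
by rewrite /f nth_default ?sizeG // big_nil !if_same.
Qed.

Lemma batch_check_recovery k : batch_check supp n.+1 m.+1 N.+1 k.+1 ->
  forall idx : 'I_k.+1 -> 'I_n.+1,
  exists (R : 'I_m.+1 -> 'I_k.+1) (f : forall l : 'I_m.+1, 'rV[F]_N.+1 -> F)
         (lam : 'I_m.+1 -> F),
    (forall l a (c d : 'rV[F]_N.+1), f l (a *: c + d) = a * f l c + f l d) /\
    forall (j : 'I_k.+1) (x : 'rV[F]_n.+1),
      x ord0 (idx j) = \sum_(l < m.+1 | R l == j) lam l * f l (enc l x).
Proof.
move=> check idx; pose s := [seq val (idx j) | j <- enum 'I_k.+1].
have sz_s : size (sort leq s) = k.+1 by rewrite size_sort size_map size_enum_ord.
have lt_s : all (fun p => p < n.+1)%N (sort leq s).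
  by rewrite all_sort all_map; apply/allP => j _ /=.
have [G [szG uG GP]] := batch_check_groups check sz_s (sort_sorted leq_total s) lt_s.
have /(perm_iotaP 0%N)[Is permIs sE] : perm_eq s (sort leq s) by rewrite perm_sym perm_sort.
have Is_lt t : t \in Is -> (t < k.+1)%N by rewrite (perm_mem permIs) mem_iota sz_s.
have szIs : size Is = k.+1 by rewrite (perm_size permIs) size_iota.
case/andP: check => suppB _.
apply: (@groups_recovery k (map (nth [::] G) Is)) => //.
- by rewrite size_map.
- have -> : map (map bucket) (map (nth [::] G) Is) = map (nth [::] (map (map bucket) G)) Is.
    by rewrite -map_comp; apply/eq_in_map => t /Is_lt ltk /=; rewrite (nth_map [::]) ?szG.
  rewrite (perm_uniq (perm_flatten (perm_map _ permIs))) sz_s -szG.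
  by rewrite -(size_map (map bucket)) map_nth_iota0 // take_size.
- move=> j; have lt_jIs : (j < size Is)%N by rewrite szIs.
  have -> : val (idx j) = nth 0%N (sort leq s) (nth 0%N Is j).
    by rewrite -(nth_map 0%N 0%N) // -sE (nth_map ord0) ?size_enum_ord // nth_ord_enum.
  by rewrite (nth_map 0%N) // GP // Is_lt // mem_nth.
Qed.

Lemma sum_code_is_BAC k : batch_check supp n.+1 m.+1 N.+1 k.+1 ->
  is_BAC F n.+1 (m.+1 * N.+1) k.+1 m.+1 (fun _ => N.+1) enc.
Proof.
move=> check; split; first exact: enc_linear.
- by [].
- by rewrite sum_nat_const card_ord.
- exact: batch_check_recovery.
Qed.

End SumCode.

(* [mod_idx n z = inord (mod_nat n z)]; the supports are computed with [mod_nat]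
   since [inord] does not reduce under [vm_compute] (its proof part is opaque). *)
Definition mod_nat (n : nat) (z : int) : nat := absz (z %% n.+1)%Z.

Definition supp5 (l b : nat) : seq nat :=
  if b == 0%N then [:: l] else [:: mod_nat 4 (l%:Z + 2); mod_nat 4 (l%:Z + 3)].

(* A computable form of [jpos], whose big operator does not reduce. *)
Definition last_pos (v : seq nat) (j : nat) : nat :=
  foldr maxn 0%N [seq i.+1 | i <- iota 0 (size v) & nth 0%N v i == j].

Definition suppC (v : seq nat) (n l b : nat) : seq nat :=
  if b == 0%N then [:: l]
  else [:: mod_nat n (l%:Z - 4 - (last_pos v b)%:Z);
           mod_nat n (l%:Z - 4 - (last_pos v b)%:Z + b%:Z)].

Lemma code5E (F : fieldType) (l : 'I_5) (x : 'rV[F]_5) b : (b <= 1)%N ->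
  code5 F l x ord0 (inord b) = \sum_(p <- supp5 l b) x ord0 (inord p).
Proof.
move=> le_b1; rewrite mxE -(inj_eq val_inj) /= inordK //.
case: b le_b1 => [|[|//]] _ /=.
  by rewrite big_seq1 inord_val.
by rewrite big_cons big_seq1.
Qed.

Lemma jposE (v : seq nat) (j : nat) : jpos v j = last_pos v j.
Proof.
rewrite /jpos -(big_mkord (fun i => nth 0%N v i == j) (fun i => i.+1)).
by rewrite /last_pos foldrE big_map big_filter /index_iota subn0.
Qed.

Lemma constrCE (F : fieldType) (v : seq nat) (n : nat) (l : 'I_n.+1) (x : 'rV[F]_n.+1) b :
  (b <= 4)%N -> constrC F v n l x ord0 (inord b) = \sum_(p <- suppC v n l b) x ord0 (inord p).
Proof.
move=> le_b4; rewrite mxE -(inj_eq val_inj) /= inordK //.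
case: b le_b4 => [|b] _ /=.
  by rewrite big_seq1 inord_val.
by rewrite jposE big_cons big_seq1.
Qed.

Lemma code5_check : batch_check supp5 5 5 2 3.
Proof. by vm_compute. Qed.

Lemma constrC_check : batch_check (suppC good_v 16) 17 17 5 7.
Proof. by vm_compute. Qed.

Local Close Scope ring_scope.

Theorem corollary4p8 (F : finFieldType) :
  is_BAC F 5 10 3 5 (fun _ => 2) (code5 F) /\
  is_BAC F 17 85 7 17 (fun _ => 5) (constrC F good_v 16).
Proof.
(* Plain [exact]: the totals 10 and 85 are only convertible to 5 * 2 and 17 * 5. *)
split; first exact (sum_code_is_BAC (@code5E F) code5_check).
exact (sum_code_is_BAC (@constrCE F good_v 16) constrC_check).
Qed.
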